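(* Let $(R,\mathfrak m)$ be a noetherian local ring, $\nu$ a valuation centered on $R$, $\nu=\nu_1\circ\nu_2$ a decomposition with $\mathfrak p=\mathfrak C_{\nu_1}(R)$, and assume $I=\mathrm{Nil}(R)$ is the only associated prime ideal of $R$. Let $y_1,\ldots,y_r,y_{r+1},\ldots,y_{r+s}$ generate $\mathfrak p$ and let $b\in R\setminus\mathfrak p$. Let $\pi:R\to R^{(1)}$ be the local blowing up with respect to $\nu$ along $(b,y_1,\ldots,y_r)$, and set $y_i^{(1)}=\pi(y_i)/b$ for $1\le i\le r$ and $y^{(1)}_{r+k}=\pi(y_{r+k})$ for $1\le k\le s$. Then $\mathfrak p^{(1)}=\mathfrak C_{\nu_1}(R^{(1)})$ is generated by $y_1^{(1)},\ldots,y_{r+s}^{(1)}$.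
   Context: All rings are commutative noetherian with $1$; $\mathrm{Nil}(A)$ is the nilradical of $A$. A valuation on a ring $R$ is a map $\nu:R\to\Gamma\cup\{\infty\}$ ($\Gamma$ an ordered abelian group) with $\nu(ab)=\nu(a)+\nu(b)$, $\nu(a+b)\ge\min\{\nu(a),\nu(b)\}$, $\nu(1)=0$, $\nu(0)=\infty$, whose support $\mathrm{supp}(\nu)=\{a:\nu(a)=\infty\}$ is a minimal prime ideal; it extends to localizations at multiplicative sets disjoint from the support via $\nu(a/s)=\nu(a)-\nu(s)$ and restricts to subrings, implicitly. $\nu$ has a center on $R$ if $\nu\ge0$ on $R$; its center is $\mathfrak C_\nu(R)=\{a:\nu(a)>0\}$. $\nu$ is centered on $(R,\mathfrak m)$ if $\nu\ge0$ on $R$ and $\nu>0$ on $\mathfrak m$. $\nu R$ is the subgroup of $\Gamma$ generated by the finite values of $\nu$. Local blowing up: for $b\in R\setminus\mathrm{supp}(\nu)$ let $J(b)=\bigcup_{i\ge1}\mathrm{ann}_R(b^i)$, so $R/J(b)\subseteq R_b$. Given $a_1,\ldots,a_r\in R$ with $\nu(a_i)\ge\nu(b)$, let $R'=(R/J(b))[a_1/b,\ldots,a_r/b]\subseteq R_b$ and $R^{(1)}=R'_{\mathfrak C_\nu(R')}$; the canonical map $R\to R^{(1)}$ is the local blowing up of $R$ with respect to $\nu$ along $(b,a_1,\ldots,a_r)$. (Here $J(b)=0$ since $\mathrm{Nil}(R)$ is the only associated prime and $b\notin\mathrm{Nil}(R)$; also $\nu(y_i)>\nu(b)$ since $y_i\in\mathfrak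 p$, $b\notin\mathfrak p$.) Decomposition: let $\Delta$ be a convex subgroup of $\nu R$. Define $\nu_1(a)=\nu(a)+\Delta\in\nu R/\Delta$ (and $\infty$ if $\nu(a)=\infty$); $\nu_1$ is a valuation with a center on $R$, and $\mathfrak p=\mathfrak C_{\nu_1}(R)=\{a:\nu(a)>\delta\ \forall\delta\in\Delta\}$. Define $\nu_2$ on $R/\mathfrak p$ by $\nu_2(a+\mathfrak p)=\nu(a)$ for $a\notin\mathfrak p$, $\infty$ for $a\in\mathfrak p$. We write $\nu=\nu_1\circ\nu_2$. On a local blowing up of $R$ with respect to $\nu$, $\nu_1$ is defined by the same formula from the extension of $\nu$. *)

From HB Require Import structures.
From mathcomp Require Import all_boot all_order all_algebra.
Set Implicit Arguments. Unset Strict Implicit. Unset Printing Implicit Defensive.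
Import GRing.Theory.
Local Open Scope ring_scope.

Definition is_oag (G : zmodType) (le : G -> G -> Prop) : Prop :=
  (forall x, le x x) /\ (forall x y z, le x y -> le y z -> le x z) /\
  (forall x y, le x y -> le y x -> x = y) /\ (forall x y, le x y \/ le y x) /\
  (forall x y z, le x y -> le (x + z) (y + z)).

Definition glt (G : zmodType) (le : G -> G -> Prop) (x y : G) := le x y /\ x <> y.

(* option G models G ∪ {oo}, with None = oo. *)
Definition vle (G : zmodType) (le : G -> G -> Prop) (a b : option G) : Prop :=
  match b with
  | None => True
  | Some y => match a with None => False | Some x => le x y end
  end.
Definition vlt (G : zmodType) (le : G -> G -> Prop) (a b : option G) : Prop :=
  vle le a b /\ a <> b.
Definition vadd (G : zmodType) (a b : option G) : option G :=
  match a, b with Some x, Some y => Some (x + y) | _, _ => None end.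
(* a - b; only meaningful when b is finite *)
Definition vsub (G : zmodType) (a b : option G) : option G :=
  match a, b with Some x, Some y => Some (x - y) | _, _ => None end.
(* c >= min(a, b), in a total order *)
Definition vge_min (G : zmodType) (le : G -> G -> Prop) (a b : option G) (c : option G) :=
  vle le a c \/ vle le b c.

Section Rings.
Variable R : comNzRingType.

Definition is_ideal (I : R -> Prop) : Prop :=
  I 0 /\ (forall a b, I a -> I b -> I (a + b)) /\ (forall a b, I b -> I (a * b)).

Definition gen_by (n : nat) (f : 'I_n -> R) (a : R) : Prop :=
  exists c : 'I_n -> R, a = \sum_(i < n) c i * f i.

Definition is_fg (I : R -> Prop) : Prop :=
  exists n (f : 'I_n -> R), forall a, I a <-> gen_by f a.

Definition noetherian : Prop := forall I, is_ideal I -> is_fg I.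

Definition is_unit (a : R) : Prop := exists u, a * u = 1.

Definition is_local_max (m : R -> Prop) : Prop :=
  is_ideal m /\ ~ m 1 /\ (forall a, ~ m a -> is_unit a).

Definition is_prime (P : R -> Prop) : Prop :=
  is_ideal P /\ ~ P 1 /\ (forall a b, P (a * b) -> P a \/ P b).

Definition is_minimal_prime (P : R -> Prop) : Prop :=
  is_prime P /\ (forall Q, is_prime Q -> (forall a, Q a -> P a) -> forall a, P a -> Q a).

Definition is_nilpotent (a : R) : Prop := exists n, a ^+ n = 0.

Definition is_assoc (P : R -> Prop) : Prop :=
  is_prime P /\ exists x : R, forall a, P a <-> a * x = 0.

Definition nzd (s : R) : Prop := forall a, a * s = 0 -> a = 0.

Variables (G : zmodType) (le : G -> G -> Prop).

Definition is_valuation (nu : R -> option G) : Prop :=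
  (forall a b, nu (a * b) = vadd (nu a) (nu b)) /\
  (forall a b, vge_min le (nu a) (nu b) (nu (a + b))) /\
  nu 1 = Some 0 /\ nu 0 = None /\
  is_minimal_prime (fun a => nu a = None).

Definition centered (nu : R -> option G) (m : R -> Prop) : Prop :=
  (forall a, vle le (Some 0) (nu a)) /\ (forall a, m a -> vlt le (Some 0) (nu a)).

Definition is_subgroup (H : G -> Prop) : Prop :=
  H 0 /\ (forall x y, H x -> H y -> H (x - y)).

(* nu R : the subgroup of G generated by the finite values of nu *)
Definition value_group (nu : R -> option G) (g : G) : Prop :=
  forall H, is_subgroup H -> (forall a h, nu a = Some h -> H h) -> H g.

Definition convex_subgroup (nu : R -> option G) (D : G -> Prop) : Prop :=
  is_subgroup D /\ (forall g, D g -> value_group nu g) /\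
  (forall d1 d2 g, D d1 -> D d2 -> value_group nu g -> le d1 g -> le g d2 -> D g).

(* ---------- Total ring of fractions (pairs num/den) ---------- *)
Definition fracR := (R * R)%type.
Definition femb (a : R) : fracR := (a, 1).
Definition fadd (x y : fracR) : fracR := (x.1 * y.2 + y.1 * x.2, x.2 * y.2).
Definition fmul (x y : fracR) : fracR := (x.1 * y.1, x.2 * y.2).
Definition fdiv (x y : fracR) : fracR := (x.1 * y.2, x.2 * y.1).
Definition feq (x y : fracR) : Prop := x.1 * y.2 = y.1 * x.2.
Definition fval (nu : R -> option G) (x : fracR) : option G := vsub (nu x.1) (nu x.2).

(* center of nu_1 = nu modulo the convex subgroup D, on R and on fractions:
   nu_1(a) > 0  iff  nu(a) > delta for every delta in D *)
Definition Cnu1 (nu : R -> option G) (D : G -> Prop) (a : R) : Prop :=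
  forall d, D d -> vlt le (Some d) (nu a).
Definition fCnu1 (nu : R -> option G) (D : G -> Prop) (x : fracR) : Prop :=
  forall d, D d -> vlt le (Some d) (fval nu x).

(* R' = R[a_1/b, ..., a_r/b] inside R_b (J(b) = 0 here), as a subring of
   the total ring of fractions: the smallest subring containing R and the a_i/b *)
Inductive in_Rprime (b : R) (r : nat) (a : 'I_r -> R) : fracR -> Prop :=
| rp_emb c : in_Rprime b a (femb c)
| rp_gen i : in_Rprime b a (fdiv (femb (a i)) (femb b))
| rp_add x y : in_Rprime b a x -> in_Rprime b a y -> in_Rprime b a (fadd x y)
| rp_mul x y : in_Rprime b a x -> in_Rprime b a y -> in_Rprime b a (fmul x y)
| rp_eq x y : nzd y.2 -> feq x y -> in_Rprime b a x -> in_Rprime b a y.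

(* R^(1) = R'_{C_nu(R')} : fractions f/g with f, g in R', nu(g) not > 0 *)
Definition in_R1 (nu : R -> option G) (b : R) (r : nat) (a : 'I_r -> R) (x : fracR) : Prop :=
  nzd x.2 /\
  exists f g, in_Rprime b a f /\ in_Rprime b a g /\
    ~ vlt le (Some 0) (fval nu g) /\ feq x (fdiv f g).

Definition R1_gen_by (nu : R -> option G) (b : R) (r : nat) (a : 'I_r -> R)
  (n : nat) (z : 'I_n -> fracR) (x : fracR) : Prop :=
  exists c : 'I_n -> fracR, (forall i, in_R1 nu b a (c i)) /\
    feq x (\big[fadd/femb 0]_(i < n) fmul (c i) (z i)).

End Rings.

Definition ytrans (R : comNzRingType) (r s : nat) (y : 'I_(r + s) -> R) (b : R)
  (i : 'I_(r + s)) : fracR R :=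
  if (i < r)%N then fdiv (femb (y i)) (femb b) else femb (y i).

(* Every element of R' = R[y_1/b, ..., y_r/b] can be written f = c + sum_i (y_i/b) h_i
   with c in R and h_i in R'.  An element x = f/g of R^(1), where nu(g) = 0, lies in
   p^(1) iff nu(f) lies above Delta; since every y_i/b already does, this happens iff
   c lies in p = (y_1, ..., y_(r+s)).  Writing c = sum_j e_j y_j then expresses x as an
   R^(1)-combination of the y_j^(1), and conversely every such combination lies in p^(1).
   The hypothesis on associated primes makes every element of finite value a
   non-zero-divisor, so that the fractions manipulated here behave as in R_b. *)

From HB Require Import structures.
From mathcomp Require Import all_boot all_order all_algebra.
From mathcomp Require Import ring.
From Stdlib Require Import Classical ClassicalEpsilon.
Import GRing.Theory.
Local Open Scope ring_scope.
Set Implicit Arguments. Unset Strict Implicit.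

Section OrderedGroup.
Variables (G : zmodType) (le : G -> G -> Prop).
Hypothesis hG : is_oag le.

Lemma oag_refl x : le x x. Proof. by case: hG. Qed.
Lemma oag_trans x y z : le x y -> le y z -> le x z.
Proof. by case: hG => _ [h _]; apply: h. Qed.
Lemma oag_anti x y : le x y -> le y x -> x = y.
Proof. by case: hG => _ [_ [h _]]; apply: h. Qed.
Lemma oag_total x y : le x y \/ le y x.
Proof. by case: hG => _ [_ [_ [h _]]]; apply: h. Qed.
Lemma oag_leD2r x y z : le x y -> le (x + z) (y + z).
Proof. by case: hG => _ [_ [_ [_ h]]]; apply: h. Qed.
Lemma oag_leD2l x y z : le x y -> le (z + x) (z + y).
Proof. by move=> h; rewrite ![z + _]addrC; apply: oag_leD2r. Qed.
Lemma oag_leD x y z t : le x y -> le z t -> le (x + z) (y + t).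
Proof. by move=> h1 h2; apply: oag_trans (oag_leD2r z h1) (oag_leD2l y h2). Qed.
Lemma oag_ler_addr x c : le 0 c -> le x (x + c).
Proof. by move=> h; have := oag_leD2l x h; rewrite addr0. Qed.

Lemma vle_trans u v w : vle le u v -> vle le v w -> vle le u w.
Proof. by case: u => [x|]; case: v => [y|]; case: w => [z|] //=; apply: oag_trans. Qed.

Lemma vlt_vle_trans u v w : vlt le u v -> vle le v w -> vlt le u w.
Proof.
case: u => [x|]; case: v => [y|]; case: w => [z|] //=; rewrite /vlt /=.
- move=> [h1 h2] h3; split; first exact: oag_trans h3.
  by move=> [e]; subst z; apply: h2; congr Some; apply: oag_anti h1 h3.
all: by move=> [[]].
Qed.

Lemma vadd_ge0 u v : vle le (Some 0) u -> vle le (Some 0) v -> vle le (Some 0) (vadd u v).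
Proof.
case: u => [x|]; case: v => [y|] //= h1 h2.
by rewrite -[0]addr0; apply: oag_leD.
Qed.

Lemma vlt_vaddl d u w : vlt le (Some d) u -> vle le (Some 0) w -> vlt le (Some d) (vadd w u).
Proof.
move=> h1 h2; apply: vlt_vle_trans h1 _.
case: u => [x|]; case: w h2 => [z|] //= h2.
by rewrite addrC; apply: oag_ler_addr.
Qed.

End OrderedGroup.

Section Subgroup.
Variables (G : zmodType) (D : G -> Prop).
Hypothesis hD : is_subgroup D.

Lemma subgroup0 : D 0. Proof. by case: hD. Qed.
Lemma subgroupD d d' : D d -> D d' -> D (d + d').
Proof.
case: hD => h0 hB hd hd'; have := hB _ _ hd (hB _ _ h0 hd').
by rewrite sub0r opprK.
Qed.

End Subgroup.

Section RingFacts.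
Variable R : comNzRingType.

Lemma sum_mul_delta n (f : 'I_n -> R) i : \sum_(j < n) f j * (j == i)%:R = f i.
Proof.
rewrite (bigD1 i) //= eqxx mulr1 big1 ?addr0 //.
by move=> j /negbTE ->; rewrite mulr0.
Qed.

Lemma gen_by_self n (f : 'I_n -> R) i : gen_by f (f i).
Proof.
exists (fun j => (j == i)%:R); rewrite -[LHS](sum_mul_delta f i).
by apply: eq_bigr => j _; rewrite mulrC.
Qed.

Lemma ideal_gen_by (I : R -> Prop) n (f : 'I_n -> R) c :
  is_ideal I -> (forall i, I (f i)) -> gen_by f c -> I c.
Proof. by move=> [I0 [ID IM]] hf [e ->]; apply: big_ind => // i _; apply: IM. Qed.

Lemma nzd1 : nzd (1 : R).
Proof. by move=> u; rewrite mulr1. Qed.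

Lemma nzdM (s t : R) : nzd s -> nzd t -> nzd (s * t).
Proof. by move=> hs ht u; rewrite mulrA => /ht /hs. Qed.

Lemma nzdX (s : R) n : nzd s -> nzd (s ^+ n).
Proof. by move=> hs; elim: n => [|n IH]; rewrite ?expr0 ?exprS; [apply: nzd1 | apply: nzdM]. Qed.

Lemma nzd_not_nilpotent (s : R) : nzd s -> ~ is_nilpotent s.
Proof.
move=> hs [n]; elim: n => [|n IH]; first by rewrite expr0; apply/eqP; apply: oner_neq0.
by rewrite exprSr => /hs.
Qed.

Lemma fsum_cross n (F : 'I_n -> fracR R) (v : 'I_n -> R) w :
  (forall i, (F i).1 * w = v i * (F i).2) ->
  (\big[@fadd R/femb 0]_(i < n) F i).1 * w =
  (\sum_(i < n) v i) * (\big[@fadd R/femb 0]_(i < n) F i).2.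
Proof.
move=> h; apply: (big_ind2 (fun (z : fracR R) V => z.1 * w = V * z.2)).
- by rewrite /= !mul0r.
- move=> x1 x2 y1 y2 /= e1 e2.
  transitivity ((x1.1 * w) * y1.2 + (y1.1 * w) * x1.2); first ring.
  by rewrite e1 e2; ring.
- by move=> i _; apply: h.
Qed.

End RingFacts.

Section Noetherian.
Variable R : comNzRingType.
Hypothesis hnoeth : noetherian R.

(* An ascending chain of ideals, each strictly larger than the previous one,
   would have a finitely generated union; its generators already lie in one
   member of the chain. *)
Lemma noetherian_maximal (F : (R -> Prop) -> Prop) I0 :
  (forall I, F I -> is_ideal I) -> F I0 ->
  exists2 I, F I & forall J, F J -> (forall t, I t -> J t) -> forall t, J t -> I t.
Proof.
move=> hF hI0; apply: NNPP => hnot.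
pose larger I J := F J /\ (forall t, I t -> J t) /\ exists t, J t /\ ~ I t.
have hstep I : F I -> exists J, larger I J.
  move=> hI; apply: NNPP => hn; apply: hnot; exists I => // J hJ hIJ t hJt.
  by apply: NNPP => hIt; apply: hn; exists J; do 2!split => //; exists t.
pose C n := iter n (fun I => epsilon (inhabits I0) (larger I)) I0.
have hC n : larger (C n) (C n.+1).
  by elim: n => [|n IH]; apply: epsilon_spec; apply: hstep; [|exact: IH.1].
have hCideal n : is_ideal (C n) by apply: hF; case: n => [|n] //; exact: (hC n).1.
have hCmono n k : (n <= k)%N -> forall t, C n t -> C k t.
  move=> /subnK <-; elim: (k - n)%N => [|j IH] //= t ht.
  by apply: (hC (j + n)%N).2.1; apply: IH.
pose U t := exists n, C n t.
have hU : is_ideal U.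
  split; first by exists 0%N; case: (hCideal 0%N).
  split=> [u v [n1 h1] [n2 h2]|u v [n h]]; last first.
    by exists n; case: (hCideal n) => _ [_]; apply.
  exists (maxn n1 n2); case: (hCideal (maxn n1 n2)) => _ [hadd _]; apply: hadd.
    exact: hCmono (leq_maxl n1 n2) _ h1.
  exact: hCmono (leq_maxr n1 n2) _ h2.
have [N [f hf]] := hnoeth hU.
pose ni i := epsilon (inhabits 0%N) (fun n => C n (f i)).
have hni i : C (ni i) (f i).
  apply: (epsilon_spec (inhabits 0%N) (fun n => C n (f i))).
  by apply/(hf (f i)); apply: gen_by_self.
pose M := (\max_(i < N) ni i)%N.
have [_ [_ [t [htM1 htM]]]] := hC M.
apply: htM; apply: (ideal_gen_by (hCideal M)) => [i|].
  exact: hCmono (leq_bigmax i) _ (hni i).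
by apply: (proj1 (hf t)); exists M.+1.
Qed.

Definition ann (z : R) : R -> Prop := fun t => t * z = 0.

Lemma ann_ideal z : is_ideal (ann z).
Proof.
split; first by rewrite /ann mul0r.
split=> [u v hu hv|u v hv]; rewrite /ann; first by rewrite mulrDl hu hv addr0.
by rewrite -mulrA hv mulr0.
Qed.

(* A maximal member of the family of annihilators of nonzero elements killed by s is prime. *)
Lemma zero_divisor_in_assoc (s c : R) :
  c <> 0 -> s * c = 0 -> exists2 P : R -> Prop, is_assoc P & P s.
Proof.
move=> hc hsc.
pose F I := exists z, [/\ z <> 0, s * z = 0 & forall t, I t <-> ann z t].
have hF I : F I -> is_ideal I.
  move=> [z [_ _ hI]]; have [h0 [hadd hmul]] := ann_ideal z.
  split; first exact/(hI 0).
  by split=> u v; rewrite !hI; [apply: hadd | apply: hmul].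
have hFc : F (ann c) by exists c; split.
have [I hFI hmax] := noetherian_maximal hF hFc; have [z [hz0 hsz hI]] := hFI.
exists I; last exact/hI.
split; last by exists z.
split; first exact: hF.
split; first by move/hI; rewrite /ann mul1r.
move=> u v huv; case: (classic (I u)) => hu; [by left | right].
have huz : u * z <> 0 by move=> e; apply: hu; apply/hI.
have hJ : F (ann (u * z)) by exists (u * z); split => //; rewrite mulrCA hsz mulr0.
apply: (hmax _ hJ); first by move=> t /hI ht; rewrite /ann mulrCA ht mulr0.
by move/hI: huv; rewrite /ann mulrA [v * u]mulrC.
Qed.

End Noetherian.

Section Valuation.
Variables (R : comNzRingType) (G : zmodType) (le : G -> G -> Prop).
Hypothesis hG : is_oag le.
Variable nu : R -> option G.
Hypothesis hval : is_valuation le nu.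

Lemma valM u v : nu (u * v) = vadd (nu u) (nu v).
Proof. by case: hval => h _; apply: h. Qed.
Lemma valD u v : vge_min le (nu u) (nu v) (nu (u + v)).
Proof. by case: hval => _ [h _]; apply: h. Qed.
Lemma val1 : nu 1 = Some 0. Proof. by case: hval => _ [_ [h _]]. Qed.
Lemma val0 : nu 0 = None. Proof. by case: hval => _ [_ [_ [h _]]]. Qed.

Lemma valX u g n : nu u = Some g -> nu (u ^+ n) = Some (g *+ n).
Proof.
move=> h; elim: n => [|n IH]; first by rewrite expr0 mulr0n val1.
by rewrite exprS valM h IH /= mulrS.
Qed.

Lemma val_nilpotent u : is_nilpotent u -> nu u = None.
Proof. by case=> n hn; case e: (nu u) => [g|] //; have := valX n e; rewrite hn val0. Qed.

Definition fin_den (x : fracR R) := nu x.2 <> None.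
Definition fnonneg (x : fracR R) := vle le (Some 0) (fval nu x).

Lemma fin_den_fmul x z : fin_den x -> fin_den z -> fin_den (fmul x z).
Proof. by rewrite /fin_den /= valM; case: (nu x.2) => // p _; case: (nu z.2). Qed.
Lemma fin_den_fadd x z : fin_den x -> fin_den z -> fin_den (fadd x z).
Proof. by rewrite /fin_den /= valM; case: (nu x.2) => // p _; case: (nu z.2). Qed.

Lemma fval_feq x z : fin_den x -> fin_den z -> feq x z -> fval nu x = fval nu z.
Proof.
rewrite /fin_den /feq /fval => hx hz /(congr1 nu); rewrite !valM.
case: (nu x.2) hx => [p|] // _; case: (nu z.2) hz => [q|] // _.
case: (nu x.1) => [u|]; case: (nu z.1) => [w|] //= [] e.
congr Some; apply: (@addIr _ (p + q)).
by rewrite addrA subrK [p + q]addrC addrA subrK.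
Qed.

Lemma fval_fmul x z : fin_den x -> fin_den z -> fval nu (fmul x z) = vadd (fval nu x) (fval nu z).
Proof.
rewrite /fin_den /fval /fmul /= => hx hz; rewrite !valM.
case: (nu x.2) hx => [p|] // _; case: (nu z.2) hz => [q|] // _.
by case: (nu x.1) => [u|]; case: (nu z.1) => [w|] //=; rewrite opprD addrACA.
Qed.

Lemma fval_fadd x z : fin_den x -> fin_den z ->
  vge_min le (fval nu x) (fval nu z) (fval nu (fadd x z)).
Proof.
rewrite /fin_den /fval /fadd /= => hx hz.
have := valD (x.1 * z.2) (z.1 * x.2); rewrite /vge_min !valM.
case: (nu x.2) hx => [p|] // _; case: (nu z.2) hz => [q|] // _.
have vsubD (u : option G) t t' : vsub (vadd u (Some t')) (Some (t + t')) = vsub u (Some t).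
  by case: u => [u|] //=; rewrite opprD addrACA subrr addr0.
have vsub_le (u w : option G) t : vle le u w -> vle le (vsub u (Some t)) (vsub w (Some t)).
  by case: u => [u|]; case: w => [w|] //=; apply: oag_leD2r.
case=> [/(vsub_le _ _ (p + q))|/(vsub_le _ _ (q + p))]; rewrite vsubD => h; [left|right] => //=.
by rewrite [p + q]addrC.
Qed.

Lemma fnonneg_fmul x z : fin_den x -> fin_den z -> fnonneg x -> fnonneg z -> fnonneg (fmul x z).
Proof. by move=> hx hz h1 h2; rewrite /fnonneg fval_fmul //; apply: vadd_ge0. Qed.

Lemma fnonneg_fadd x z : fin_den x -> fin_den z -> fnonneg x -> fnonneg z -> fnonneg (fadd x z).
Proof.
move=> hx hz h1 h2; case: (fval_fadd hx hz) => h; first exact: vle_trans h1 h.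
exact: vle_trans h2 h.
Qed.

(* From [x.1 * w = A * x.2] with [nu w >= 0] one reads off [nu A = fval x + nu w]. *)
Lemma fval_le_cross x w A : fin_den x -> vle le (Some 0) (nu w) ->
  nu (x.1 * w) = nu (A * x.2) -> vle le (fval nu x) (nu A).
Proof.
rewrite /fin_den /fval !valM; case: (nu x.2) => [q|] // _.
case: (nu A) => [al|]; last by case: (nu x.1).
case: (nu x.1) => [u|]; case: (nu w) => [be|] //= hbe [] e.
have -> : al = u - q + be by rewrite -[al](addrK q) -e addrAC.
exact: oag_ler_addr.
Qed.

Variable D : G -> Prop.

Lemma Cnu1_0 : Cnu1 le nu D 0.
Proof. by move=> d hd; rewrite val0. Qed.

Lemma Cnu1_add u v : Cnu1 le nu D u -> Cnu1 le nu D v -> Cnu1 le nu D (u + v).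
Proof.
move=> hu hv d hd; case: (valD u v) => h; first exact: vlt_vle_trans (hu _ hd) h.
exact: vlt_vle_trans (hv _ hd) h.
Qed.

Lemma Cnu1_mull u v : vle le (Some 0) (nu u) -> Cnu1 le nu D v -> Cnu1 le nu D (u * v).
Proof. by move=> hu hv d hd; rewrite valM; apply: vlt_vaddl => //; apply: hv. Qed.

Lemma fCnu1_femb u : fCnu1 le nu D (femb u) <-> Cnu1 le nu D u.
Proof. by rewrite /fCnu1 /Cnu1 /fval /= val1; case: (nu u) => [g|] /=; rewrite ?subr0. Qed.

Lemma fCnu1_fmul c x : fin_den c -> fin_den x -> fnonneg c ->
  fCnu1 le nu D x -> fCnu1 le nu D (fmul c x).
Proof. by move=> hc hx h1 h2 d hd; rewrite fval_fmul //; apply: vlt_vaddl => //; apply: h2. Qed.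

Lemma fCnu1_fadd x z : fin_den x -> fin_den z -> fCnu1 le nu D x -> fCnu1 le nu D z ->
  fCnu1 le nu D (fadd x z).
Proof.
move=> hx hz h1 h2 d hd; case: (fval_fadd hx hz) => h.
  exact: vlt_vle_trans (h1 d hd) h.
exact: vlt_vle_trans (h2 d hd) h.
Qed.

Lemma not_Cnu1_val u : ~ Cnu1 le nu D u ->
  exists g d, [/\ nu u = Some g, D d & le g d].
Proof.
move=> hu; apply: NNPP => hn; apply: hu => d hd.
case e: (nu u) => [g|]; last by split.
case: (oag_total hG d g) => h; last by case: hn; exists g, d.
split=> // -[ed]; apply: hn; exists g, g; split => //; first by rewrite -ed.
exact: oag_refl.
Qed.

Hypothesis hD : is_subgroup D.

Lemma Cnu1_prime u v : Cnu1 le nu D (u * v) -> Cnu1 le nu D u \/ Cnu1 le nu D v.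
Proof.
move=> huv; apply: NNPP => hn.
have [g1 [d1 [e1 hd1 l1]]] := not_Cnu1_val (fun h => hn (or_introl h)).
have [g2 [d2 [e2 hd2 l2]]] := not_Cnu1_val (fun h => hn (or_intror h)).
have [h1 h2] := huv _ (subgroupD hD hd1 hd2); rewrite valM e1 e2 /= in h1 h2.
by apply: h2; congr Some; apply: (oag_anti hG h1); apply: oag_leD.
Qed.

Lemma not_Cnu1X u n : ~ Cnu1 le nu D u -> ~ Cnu1 le nu D (u ^+ n).
Proof.
move=> hu; elim: n => [|n IH].
  by rewrite expr0 => /(_ _ (subgroup0 hD)) []; rewrite val1.
by rewrite exprS => /Cnu1_prime [].
Qed.

End Valuation.

Section Nilradical.
Variables (R : comNzRingType) (G : zmodType) (le : G -> G -> Prop) (nu : R -> option G).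
Hypothesis hval : is_valuation le nu.
Hypothesis hass : forall P : R -> Prop, is_assoc P <-> (forall u, P u <-> is_nilpotent u).

(* The support of [nu] is a minimal prime and contains the nilradical, which is prime. *)
Lemma val_eqNone_nilpotent u : nu u = None -> is_nilpotent u.
Proof.
case: hval => _ [_ [_ [_ [_ hmin]]]]; apply: hmin; last exact: (val_nilpotent hval).
by have [] := proj2 (hass (@is_nilpotent R)) (fun u => iff_refl _).
Qed.

Lemma nzd_val_fin s : nzd s -> nu s <> None.
Proof. by move=> hs /val_eqNone_nilpotent; apply: nzd_not_nilpotent. Qed.

Hypothesis hnoeth : noetherian R.

Lemma not_nilpotent_nzd (s : R) : ~ is_nilpotent s -> nzd s.
Proof.
move=> hs c hcs; apply: NNPP => hc.
have [P hP hPs] := zero_divisor_in_assoc hnoeth hc (etrans (mulrC _ _) hcs).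
by apply: hs; apply/(proj1 (hass P) hP).
Qed.

Lemma val_fin_nzd s : nu s <> None -> nzd s.
Proof. by move=> hs; apply: not_nilpotent_nzd => /(val_nilpotent hval). Qed.

End Nilradical.

Section LocalBlowup.
Variables (R : comNzRingType) (G : zmodType) (le : G -> G -> Prop).
Hypothesis hG : is_oag le.
Variable nu : R -> option G.
Hypothesis hval : is_valuation le nu.
Hypothesis hge0 : forall u, vle le (Some 0) (nu u).
Hypothesis hnzd : forall t : R, nzd t -> nu t <> None.
Variables (b : R) (r : nat) (a : 'I_r -> R).
Hypothesis hb : nzd b.
Hypothesis ha : forall i, vle le (nu b) (nu (a i)).

Lemma Rprime_den_nzd u : in_Rprime b a u -> nzd u.2.
Proof.
elim=> //= [_|_|x z _ h1 _ h2|x z _ h1 _ h2]; first exact: nzd1.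
- by rewrite mul1r.
- exact: nzdM.
- exact: nzdM.
Qed.

Lemma Rprime_fin_den u : in_Rprime b a u -> fin_den nu u.
Proof. by move/Rprime_den_nzd; apply: hnzd. Qed.

Lemma Rprime_of_femb u c : nzd u.2 -> feq (femb c) u -> in_Rprime b a u.
Proof. by move=> hu e; apply: rp_eq hu e (rp_emb _ _ c). Qed.

Lemma Rprime_zero n : in_Rprime b a (0, b ^+ n).
Proof. by apply: (Rprime_of_femb (c := 0)); [apply: nzdX | rewrite /feq /= !mul0r]. Qed.

Lemma Rprime_fnonneg u : in_Rprime b a u -> fnonneg le nu u.
Proof.
elim=> [c|i|x z hx h1 hz h2|x z hx h1 hz h2|x z hz2 e hx h].
- rewrite /fnonneg /fval /= (val1 hval); have := hge0 c.
  by case: (nu c) => [g|] //=; rewrite subr0.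
- rewrite /fnonneg /fval /fdiv /femb /= mulr1 mul1r; have := ha i.
  case: (nu b) (hnzd hb) => [be|] // _; case: (nu (a i)) => [g|] //= hle.
  by rewrite -(subrr be); apply: oag_leD2r.
- by apply: fnonneg_fadd => //; apply: Rprime_fin_den.
- by apply: fnonneg_fmul => //; apply: Rprime_fin_den.
- by rewrite /fnonneg -(fval_feq hval (Rprime_fin_den hx) (hnzd hz2) e).
Qed.

(* [u = c + \sum_i (a i / b) * (Gs i / b ^ k)], with every [Gs i / b ^ k] in R'. *)
Definition Rprime_expansion (u : fracR R) k c (Gs : 'I_r -> R) :=
  u.1 * b ^+ k.+1 = (c * b ^+ k.+1 + \sum_(i < r) a i * Gs i) * u.2 /\
  forall i, in_Rprime b a (Gs i, b ^+ k).

Lemma expansion_femb c : Rprime_expansion (femb c) 0 c (fun _ => 0).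
Proof.
split=> [|i]; last exact: Rprime_zero.
by rewrite big1 ?addr0 ?mulr1 // => i _; rewrite mulr0.
Qed.

Lemma expansion_gen i :
  Rprime_expansion (fdiv (femb (a i)) (femb b)) 0 0 (fun j => (j == i)%:R).
Proof.
split=> [|j]; last first.
  by apply: (Rprime_of_femb (c := (j == i)%:R)); [exact: nzd1 | rewrite /feq /= !mulr1].
by rewrite sum_mul_delta /= expr1; ring.
Qed.

Lemma expansion_fadd x z k1 k2 c1 c2 G1 G2 :
  in_Rprime b a x -> in_Rprime b a z ->
  Rprime_expansion x k1 c1 G1 -> Rprime_expansion z k2 c2 G2 ->
  Rprime_expansion (fadd x z) (k1.+1 + k2) (c1 + c2)
    (fun i => G1 i * b ^+ k2.+1 + G2 i * b ^+ k1.+1).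
Proof.
move=> hx hz [E1 H1] [E2 H2]; split=> [|i].
  rewrite -addnS exprD /=.
  have -> : \sum_(i < r) a i * (G1 i * b ^+ k2.+1 + G2 i * b ^+ k1.+1) =
      (\sum_(i < r) a i * G1 i) * b ^+ k2.+1 + (\sum_(i < r) a i * G2 i) * b ^+ k1.+1.
    by rewrite !mulr_suml -big_split; apply: eq_bigr => i _ /=; ring.
  transitivity ((x.1 * b ^+ k1.+1) * (b ^+ k2.+1 * z.2) + (z.1 * b ^+ k2.+1) * (b ^+ k1.+1 * x.2)).
    by ring.
  by rewrite E1 E2; ring.
apply: (@rp_eq _ _ _ _ (fadd (G1 i, b ^+ k1) (G2 i, b ^+ k2))).
- exact: nzdX.
- by rewrite /feq /= exprD !exprS; ring.
- exact: rp_add.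
Qed.

Lemma expansion_fmul x z k1 k2 c1 c2 G1 G2 :
  in_Rprime b a x -> in_Rprime b a z ->
  Rprime_expansion x k1 c1 G1 -> Rprime_expansion z k2 c2 G2 ->
  let A2 := c2 * b ^+ k2.+1 + \sum_(j < r) a j * G2 j in
  Rprime_expansion (fmul x z) (k1.+1 + k2) (c1 * c2)
    (fun i => c1 * b ^+ k1.+1 * G2 i + G1 i * A2).
Proof.
move=> hx hz [E1 H1] [E2 H2] A2; split=> [|i].
  rewrite -addnS exprD /=.
  have -> : \sum_(i < r) a i * (c1 * b ^+ k1.+1 * G2 i + G1 i * A2) =
      c1 * b ^+ k1.+1 * (\sum_(i < r) a i * G2 i) + (\sum_(i < r) a i * G1 i) * A2.
    by rewrite mulr_sumr mulr_suml -big_split; apply: eq_bigr => i _ /=; ring.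
  transitivity ((x.1 * b ^+ k1.+1) * (z.1 * b ^+ k2.+1)); first by ring.
  by rewrite E1 E2 /A2; ring.
have hA2 : in_Rprime b a (A2, b ^+ k2.+1) by apply: (rp_eq _ _ hz) => //; apply: nzdX.
apply: (@rp_eq _ _ _ _ (fadd (fmul (femb c1) (G2 i, b ^+ k2)) (fmul (G1 i, b ^+ k1) (A2, b ^+ k2.+1)))).
- exact: nzdX.
- by rewrite /feq /= exprD !exprS; ring.
- by apply: rp_add; apply: rp_mul => //; apply: rp_emb.
Qed.

Lemma expansion_feq x z k c Gs : in_Rprime b a x -> feq x z ->
  Rprime_expansion x k c Gs -> Rprime_expansion z k c Gs.
Proof.
rewrite /feq => hx e [E HG]; split=> //.
set A := c * b ^+ k.+1 + _ in E *.
apply/eqP; rewrite -subr_eq0; apply/eqP; apply: (Rprime_den_nzd hx).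
transitivity (z.1 * x.2 * b ^+ k.+1 - A * x.2 * z.2); first by ring.
by rewrite -e; transitivity ((x.1 * b ^+ k.+1 - A * x.2) * z.2); [ring | rewrite E subrr mul0r].
Qed.

Lemma Rprime_expand u : in_Rprime b a u -> exists k c Gs, Rprime_expansion u k c Gs.
Proof.
elim=> [c|i|x z hx [k1 [c1 [G1 E1]]] hz [k2 [c2 [G2 E2]]]|x z hx [k1 [c1 [G1 E1]]] hz [k2 [c2 [G2 E2]]]|x z _ e hx [k [c [Gs E]]]].
- by exists 0%N, c, (fun _ => 0); apply: expansion_femb.
- by exists 0%N, 0, (fun j => (j == i)%:R); apply: expansion_gen.
- by do 3!eexists; apply: expansion_fadd E1 E2.
- by do 3!eexists; apply: expansion_fmul E1 E2.
- by exists k, c, Gs; apply: expansion_feq E.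
Qed.

Lemma R1_den_val g : in_Rprime b a g -> ~ vlt le (Some 0) (fval nu g) ->
  exists t, nu g.1 = Some t /\ nu g.2 = Some t.
Proof.
move=> hg hn; have := Rprime_fnonneg hg; have := Rprime_fin_den hg.
rewrite /fnonneg /fin_den /fval in hn *.
case: (nu g.2) hn => [q|] // hn _; case: (nu g.1) hn => [p|] /= hn; last by case: hn.
move=> h; exists p; split => //; congr Some; apply/esym/subr0_eq.
by apply: NNPP => hne; apply: hn; split=> // -[/esym].
Qed.

Lemma R1_fnonneg x : in_R1 le nu b a x -> fin_den nu x /\ fnonneg le nu x.
Proof.
move=> [hx2 [f [g [hf [hg [hng e]]]]]].
have hFx : fin_den nu x by apply: hnzd.
have [t [e1 e2]] := R1_den_val hg hng.
have hFf := Rprime_fin_den hf.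
have hFg : fin_den nu (g.2, g.1) by rewrite /fin_den /= e1.
have hFd : fin_den nu (fdiv f g) by apply: (fin_den_fmul hval) hFf hFg.
split=> //; rewrite /fnonneg (fval_feq hval hFx hFd e) (fval_fmul hval hFf hFg).
apply: vadd_ge0 => //; first exact: Rprime_fnonneg.
by rewrite /fval /= e1 e2 /= subrr; apply: oag_refl.
Qed.

End LocalBlowup.

Section Center.
Variables (R : comNzRingType) (G : zmodType) (le : G -> G -> Prop).
Hypothesis hG : is_oag le.
Variable nu : R -> option G.
Hypothesis hval : is_valuation le nu.
Hypothesis hge0 : forall u, vle le (Some 0) (nu u).
Hypothesis hass : forall P : R -> Prop, is_assoc P <-> (forall u, P u <-> is_nilpotent u).
Hypothesis hnoeth : noetherian R.
Variable D : G -> Prop.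
Hypothesis hD : is_subgroup D.
Variables (r s : nat) (y : 'I_(r + s) -> R).
Hypothesis hgen : forall u, Cnu1 le nu D u <-> gen_by y u.
Variable b : R.
Hypothesis hb : ~ Cnu1 le nu D b.
Let a (i : 'I_r) := y (lshift s i).

Lemma Cnu1_y j : Cnu1 le nu D (y j).
Proof. exact/hgen/gen_by_self. Qed.

Lemma nzd_b : nzd b.
Proof.
have [g [d [e _ _]]] := not_Cnu1_val hG hb.
by apply: (val_fin_nzd hval hass hnoeth); rewrite e.
Qed.

Lemma fCnu1_divb u : Cnu1 le nu D u -> fCnu1 le nu D (fdiv (femb u) (femb b)).
Proof.
have [be [d0 [eb hd0 hle]]] := not_Cnu1_val hG hb.
move=> hu d hd; rewrite /fval /= mulr1 mul1r eb.
have := hu _ (subgroupD hD hd hd0).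
case: (nu u) => [g|] //= [h1 h2]; split.
  by have := oag_leD2r hG (-be) (oag_trans hG (oag_leD2l hG d hle) h1); rewrite addrK.
move=> [e]; apply: h2; congr Some; apply: (oag_anti hG h1).
by rewrite -[g](subrK be) e; apply: oag_leD2l.
Qed.

Lemma val_b_le u : Cnu1 le nu D u -> vle le (nu b) (nu u).
Proof.
move=> hu; have := fCnu1_divb hu (subgroup0 hD); rewrite /fval /= mulr1 mul1r.
case: (nu b) (nzd_val_fin hval hass nzd_b) => [be|] // _; case: (nu u) => [g|] //= [+ _].
by move=> /(oag_leD2r hG be); rewrite subrK add0r.
Qed.

Let hnzd : forall t, nzd t -> nu t <> None := nzd_val_fin hval hass.
Let hab i : vle le (nu b) (nu (a i)) := val_b_le (Cnu1_y _).

Lemma ytrans_fCnu1 j : fin_den nu (ytrans y b j) /\ fCnu1 le nu D (ytrans y b j).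
Proof.
rewrite /ytrans; case: ifP => _; split.
- by rewrite /fin_den /= mul1r; apply: hnzd nzd_b.
- exact/fCnu1_divb/Cnu1_y.
- by rewrite /fin_den /= (val1 hval).
- exact/(fCnu1_femb hval)/Cnu1_y.
Qed.

Lemma fCnu1_R1_gen_by x : nzd x.2 -> R1_gen_by le nu b a (ytrans y b) x -> fCnu1 le nu D x.
Proof.
move=> hx2 [c [hc e]].
set S := \big[@fadd R/femb 0]_(i < r + s) _ in e.
have [hS1 hS2] : fin_den nu S /\ fCnu1 le nu D S.
  apply: (big_ind (fun z => fin_den nu z /\ fCnu1 le nu D z)).
  - split; first by rewrite /fin_den /= (val1 hval).
    by move=> d hd; rewrite /fval /= (val0 hval) (val1 hval).
  - move=> u w [h1 h2] [h3 h4].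
    by split; [apply: (fin_den_fadd hval) | apply: (fCnu1_fadd hG hval)].
  - move=> j _; have [hF hN] := R1_fnonneg hG hval hge0 hnzd nzd_b hab (hc j).
    have [hz1 hz2] := ytrans_fCnu1 j.
    by split; [apply: (fin_den_fmul hval) | apply: (fCnu1_fmul hG hval)].
by move=> d hd; rewrite (fval_feq hval (hnzd hx2) hS1 e); apply: hS2.
Qed.

Section Expansion.
Variables (k : nat) (c : R) (Gs : 'I_r -> R).
Let B := b ^+ k.+1.
Let A := c * B + \sum_(i < r) a i * Gs i.

(* [nu A >= fval x] lies above [D]; so does the [a i]-part of [A], hence [c * B],
   and [B] does not, [b] being outside the center. *)
Lemma Cnu1_expansion_const x g t : fin_den nu x -> fCnu1 le nu D x ->
  nu g.1 = Some t -> nu g.2 = Some t -> x.1 * (B * g.1) = g.2 * A * x.2 ->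
  Cnu1 le nu D c.
Proof.
move=> hx hP e1 e2 Ex.
have hnu : nu (x.1 * B) = nu (A * x.2).
  have : x.1 * B * g.1 = A * x.2 * g.2 by rewrite -mulrA Ex; ring.
  move/(congr1 nu); rewrite (valM hval _ g.1) (valM hval _ g.2) e1 e2.
  by case: (nu (x.1 * B)) => [?|]; case: (nu (A * x.2)) => [?|] //= [/addIr ->].
have hA : Cnu1 le nu D A.
  move=> d hd; apply: (vlt_vle_trans hG (hP d hd)).
  exact: (fval_le_cross hG hval hx (hge0 B) hnu).
have hS : Cnu1 le nu D (\sum_(i < r) a i * Gs i).
  apply: big_ind => [|u v|i _]; [exact: (Cnu1_0 hval) | exact: (Cnu1_add hG hval) |].
  by rewrite mulrC; apply: (Cnu1_mull hG hval) => //; apply: Cnu1_y.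
have hcB : Cnu1 le nu D (c * B).
  have -> : c * B = A + (-1) * \sum_(i < r) a i * Gs i by rewrite /A; ring.
  by apply: (Cnu1_add hG hval) => //; apply: (Cnu1_mull hG hval).
by case: (Cnu1_prime hG hval hD hcB) => // /(not_Cnu1X hG hval hD) [].
Qed.

(* With [c = \sum_j e j * y j], the coefficient of [ytrans y b j] is
   [(e j * b + Gs i / b ^ k) / g] for [j = lshift s i], and [e j / g] otherwise. *)
Lemma R1_gen_by_expansion x g : in_Rprime b a g -> ~ vlt le (Some 0) (fval nu g) ->
  nzd g.1 -> (forall i, in_Rprime b a (Gs i, b ^+ k)) -> gen_by y c ->
  x.1 * (B * g.1) = g.2 * A * x.2 -> R1_gen_by le nu b a (ytrans y b) x.
Proof.
move=> hg hng hg1 HG [e He] Ex.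
pose Gext (j : 'I_(r + s)) := if split j is inl i then Gs i else 0.
pose H (j : 'I_(r + s)) := fadd (femb (e j * if (j < r)%N then b else 1)) (Gext j, b ^+ k).
have hH j : in_Rprime b a (H j).
  apply: rp_add; first exact: rp_emb.
  by rewrite /Gext; case: split => i; [apply: HG | apply: (Rprime_zero a nzd_b)].
exists (fun j => fdiv (H j) g); split=> [j|].
  split; first by rewrite /= mul1r; apply: nzdM => //; apply: nzdX nzd_b.
  by exists (H j), g; split; [|split; [|split]].
set S := \big[@fadd R/femb 0]_(j < r + s) _.
have hS : S.1 * (B * g.1) = g.2 * A * S.2.
  pose v j := (e j * B + Gext j) * g.2 * y j.
  have -> : g.2 * A = \sum_(j < r + s) v j.
    rewrite (eq_bigr (fun j => g.2 * B * (e j * y j) + g.2 * (Gext j * y j))); last first.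
      by move=> j _; rewrite /v; ring.
    rewrite big_split /= -!mulr_sumr -He big_split_ord /= [\sum_(i < s) _]big1; last first.
      by move=> i _; rewrite /Gext (@unsplitK r s (inr i)) mul0r.
    rewrite (eq_bigr (fun i => a i * Gs i)); last first.
      by move=> i _; rewrite /Gext (@unsplitK r s (inl i)) mulrC.
    by rewrite addr0 /A; ring.
  apply: fsum_cross => j; rewrite /v /H /ytrans /Gext /=.
  case: split_ordP => i ->; rewrite ?(@unsplitK r s (inl i)) ?(@unsplitK r s (inr i)) /=.
    by rewrite /B exprS; ring.
  by rewrite /B; ring.
have hBg : nzd (B * g.1) by apply: nzdM => //; apply: nzdX nzd_b.
rewrite /feq; apply/eqP; rewrite -subr_eq0; apply/eqP; apply: hBg.
transitivity (S.2 * (x.1 * (B * g.1)) - x.2 * (S.1 * (B * g.1))); first by ring.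
by rewrite Ex hS; ring.
Qed.

End Expansion.

Lemma fCnu1_iff_R1_gen_by x : in_R1 le nu b a x ->
  fCnu1 le nu D x <-> R1_gen_by le nu b a (ytrans y b) x.
Proof.
move=> [hx2 [f [g [hf [hg [hng hxe]]]]]]; split; last exact: fCnu1_R1_gen_by.
move=> hx; have [t [e1 e2]] := R1_den_val hG hval hge0 hnzd nzd_b hab hg hng.
have [k [c [Gs [Ef HG]]]] := Rprime_expand nzd_b hf.
set A := c * b ^+ k.+1 + _ in Ef.
have Ex : x.1 * (b ^+ k.+1 * g.1) = g.2 * A * x.2.
  apply/eqP; rewrite -subr_eq0; apply/eqP; apply: (Rprime_den_nzd nzd_b hf).
  move: hxe; rewrite /feq /= => hxe.
  transitivity (b ^+ k.+1 * (x.1 * (f.2 * g.1)) - g.2 * x.2 * (A * f.2)); first by ring.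
  by rewrite hxe -Ef; ring.
have hc := Cnu1_expansion_const (hnzd hx2) hx e1 e2 Ex.
have hg1 : nzd g.1 by apply: (val_fin_nzd hval hass hnoeth); rewrite e1.
exact: R1_gen_by_expansion hg hng hg1 HG (proj1 (hgen c) hc) Ex.
Qed.

End Center.

Theorem mainTheorem14
  (R : comNzRingType) (m : R -> Prop)
  (hloc : is_local_max m) (hnoeth : noetherian R)
  (G : zmodType) (le : G -> G -> Prop) (hG : is_oag le)
  (nu : R -> option G) (hval : is_valuation le nu) (hcent : centered le nu m)
  (D : G -> Prop) (hD : convex_subgroup le nu D)
  (hass : forall P : R -> Prop, is_assoc P <-> (forall a, P a <-> is_nilpotent a))
  (r s : nat) (y : 'I_(r + s) -> R)
  (hgen : forall a, Cnu1 le nu D a <-> gen_by y a)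
  (b : R) (hb : ~ Cnu1 le nu D b) :
  let a := fun i : 'I_r => y (lshift s i) in
  forall x : fracR R, in_R1 le nu b a x ->
    (fCnu1 le nu D x <-> R1_gen_by le nu b a (ytrans y b) x).
Proof.
exact: (fCnu1_iff_R1_gen_by hG hval hcent.1 hass hnoeth hD.1 hgen hb).
Qed.
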